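(* Let $\widehat D=(Q,\widehat\Sigma,q_0,\delta,F)$ be as in the context and let $\mathcal A=(Q,\Sigma,q_0,\delta_0,\delta_1,F)$ be defined as follows: for $q\in Q$, $\sigma\in\Sigma$, $c\in\{0,1\}$, if $\delta(q,\sigma^c)=q'$ is defined, then $\delta_c(q,\sigma)=(q',\mathit{act}|_\sigma)$, where $\mathit{act}\in\Sigma_{\mathsf{Act}}$ is any letter with $\mathit{act}[0]=c$, $\delta(q,\mathit{act})$ defined and $\mathit{act}|_\sigma\neq\bot$; otherwise $\delta_c(q,\sigma)$ is undefined. Then such an $\mathit{act}$ always exists, the value $\mathit{act}|_\sigma$ does not depend on the choice of $\mathit{act}$ (so $\delta_0,\delta_1$ are well defined, with $\delta_0$ using only counter updates in $\{0,+1\}$), and $\mathcal A$ is a (partial) deterministic real-time one-counter automaton consistent with the sample: for every $w\in\mathrm{pref}(\mathcal S)$ the run of $\mathcal A$ on $w$ exists and its counter-effect equals $\mathsf{ce}(w)$, every word of $\mathcal S^+$ is accepted by $\mathcal A$, and every word of $\mathcal S^-$ is rejected by $\mathcal A$.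
   Context: Let $\Sigma=\{\sigma_1,\dots,\sigma_k\}$ be a finite alphabet. A sample set is a pair of finite sets of words $\mathcal S^+,\mathcal S^-\subseteq\Sigma^*$ with $\mathcal S^+\cap\mathcal S^-=\emptyset$; write $\mathcal S=\mathcal S^+\cup\mathcal S^-$ and $\mathrm{pref}(\mathcal S)$ for the set of all prefixes (including $\varepsilon$ and the words themselves) of words of $\mathcal S$. We are given $\mathsf{ce}:\mathrm{pref}(\mathcal S)\to\mathbb N$ with $\mathsf{ce}(\varepsilon)=0$ and $\mathsf{ce}(w\sigma)-\mathsf{ce}(w)\in\{-1,0,+1\}$ whenever $w\sigma\in\mathrm{pref}(\mathcal S)$, $\sigma\in\Sigma$. For $d\in\mathbb N$, $\mathrm{sgn}(d)=0$ if $d=0$ and $1$ otherwise. For $w\in\mathrm{pref}(\mathcal S)$ define $\mathsf{Act}(w)\in\{0,1\}\times\{0,+1,-1,\bot\}^k$ by $\mathsf{Act}(w)[0]=\mathrm{sgn}(\mathsf{ce}(w))$ and, for $i\in[1,k]$, $\mathsf{Act}(w)[i]=\mathsf{ce}(w\sigma_i)-\mathsf{ce}(w)$ if $w\sigma_i\in\mathrm{pref}(\mathcal S)$, and $\mathsf{Act}(w)[i]=\bot$ otherwise. For a tuple $\mathit{act}$ of this shape, $\mathit{act}|_{\sigma_i}$ denotes $\mathit{act}[i]$. Two such tuples $x,y$ are similar, $x\sim y$, if either $x[0]\neq y[0]$, or for all $i\in[1,k]$: $x[i]=\bot$ or $y[i]=\bot$ or $x[i]=y[i]$; otherwise $x\not\sim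 y$. Let $\widetilde\Sigma=\{\sigma^0,\sigma^1:\sigma\in\Sigma\}$ (fresh letters). For $w\in\mathrm{pref}(\mathcal S)$, $\mathsf{Enc}(\varepsilon)=\varepsilon$ and $\mathsf{Enc}(w)$ is the word over $\widetilde\Sigma$ of the same length with $\mathsf{Enc}(w)[0]=w[0]^0$ and $\mathsf{Enc}(w)[i]=w[i]^{\mathrm{sgn}(\mathsf{ce}(w[0\cdots i-1]))}$ for $i>0$ (positions indexed from $0$). Let $\Sigma_{\mathsf{Act}}=\{\mathsf{Act}(w):w\in\mathrm{pref}(\mathcal S)\}$, viewed as a set of fresh letters, and $\widehat\Sigma=\widetilde\Sigma\cup\Sigma_{\mathsf{Act}}$. The enriched sample over $\widehat\Sigma$ is: $\widehat{\mathcal S}^+=\{\mathsf{Enc}(w):w\in\mathcal S^+\}\cup\{\mathsf{Enc}(w)\cdot\mathsf{Act}(w):w\in\mathrm{pref}(\mathcal S)\}$ and $\widehat{\mathcal S}^-=\{\mathsf{Enc}(w):w\in\mathcal S^-\}\cup\{\mathsf{Enc}(w)\cdot\mathit{op}:w\in\mathrm{pref}(\mathcal S),\ \mathit{op}\in\Sigma_{\mathsf{Act}},\ \mathit{op}\not\sim\mathsf{Act}(w)\}$. $\widehat D=(Q,\widehat\Sigma,q_0,\delta,F)$ is a deterministic finite automaton with possibly partial transition function $\delta$ (a word is accepted iff its run exists and ends in $F$) such that: (i) $\widehat D$ accepts every word of $\widehat{\mathcal S}^+$ and rejects every word of $\widehat{\mathcal S}^-$; (ii) every transition comes from a prefix of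 a positive sample: whenever $\delta(q,x)=q'$ with $x\in\widehat\Sigma$, there is a word $u$ with $ux\in\mathrm{pref}(\widehat{\mathcal S}^+)$ and $\delta(q_0,u)=q$. (These properties hold e.g. for the output of the RPNI algorithm.) A deterministic real-time one-counter automaton (DROCA) is $\mathcal A=(Q,\Sigma,q_0,\delta_0,\delta_1,F)$ with (here possibly partial) maps $\delta_0:Q\times\Sigma\to Q\times\{0,+1\}$ and $\delta_1:Q\times\Sigma\to Q\times\{0,+1,-1\}$. Configurations are pairs $(p,n)\in Q\times\mathbb N$; there is a step $(p,n)\xrightarrow{a}(q,n+e)$ iff $\delta_{\mathrm{sgn}(n)}(p,a)=(q,e)$. The run on $w$ starts at $(q_0,0)$; if it exists and ends in $(q,m)$, then $m$ is the counter-effect $\mathsf{ce}_{\mathcal A}(w)$ and $w$ is accepted iff $q\in F$; otherwise $w$ is rejected. *)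

From HB Require Import structures.
From mathcomp Require Import all_boot all_order all_algebra.
Set Implicit Arguments. Unset Strict Implicit. Unset Printing Implicit Defensive.
Import GRing.Theory Num.Theory.

Section Sample.
Variable Sigma : finType.
Variables (Sp Sm : seq (seq Sigma)).
Variable ce : seq Sigma -> nat.        (* only its values on pref(S) matter *)

Definition inpref (w : seq Sigma) : bool := has (prefix w) (Sp ++ Sm).

(* sgn(d) as a bit: false = 0, true = 1 *)
Definition sgnb (d : nat) : bool := d != 0%N.

(* A tuple in {0,1} x {0,+1,-1,bot}^k : the first component and a finite map
   Sigma -> option int (None = bot). *)
Definition actT := (bool * {ffun Sigma -> option int})%type.

Definition Act (w : seq Sigma) : actT :=
  (sgnb (ce w),
   [ffun a => if inpref (rcons w a)
              then Some ((ce (rcons w a))%:Z - (ce w)%:Z)%R else None]).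

Definition similar (x y : actT) : Prop :=
  x.1 <> y.1 \/ forall a, x.2 a = None \/ y.2 a = None \/ x.2 a = y.2 a.

(* Letters of the enriched alphabet: inl (s, c) is s^c, inr act is act. *)
Definition hatT := ((Sigma * bool) + actT)%type.

(* enc_aux p w : encoding of the suffix w of a word whose already read part is p;
   position 0 gets bit 0, position i > 0 gets sgn(ce(prefix of length i)). *)
Fixpoint enc_aux (p w : seq Sigma) : seq hatT :=
  match w with
  | [::] => [::]
  | a :: w' => inl (a, if p is [::] then false else sgnb (ce p))
                 :: enc_aux (rcons p a) w'
  end.

Definition Enc (w : seq Sigma) : seq hatT := enc_aux [::] w.

Definition inSigmaAct (x : actT) : Prop := exists2 w, inpref w & x = Act w.

Definition Shat_pos (u : seq hatT) : Prop :=
  (exists2 w, w \in Sp & u = Enc w) \/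
  (exists2 w, inpref w & u = rcons (Enc w) (inr (Act w))).

Definition Shat_neg (u : seq hatT) : Prop :=
  (exists2 w, w \in Sm & u = Enc w) \/
  (exists w op, [/\ inpref w, inSigmaAct op, ~ similar op (Act w)
                  & u = rcons (Enc w) (inr op)]).

End Sample.

Fixpoint drun (Q X : Type) (d : Q -> X -> option Q) (q : Q) (u : seq X)
  : option Q :=
  match u with
  | [::] => Some q
  | x :: u' => match d q x with Some q' => drun d q' u' | None => None end
  end.

Definition daccepts (Q : finType) (X : Type) (d : Q -> X -> option Q) (q0 : Q)
  (F : {set Q}) (u : seq X) : bool :=
  if drun d q0 u is Some q then q \in F else false.

Definition ostep (Q Sigma : Type) (d0 d1 : Q -> Sigma -> option (Q * int))
  (c : Q * nat) (a : Sigma) : option (Q * nat) :=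
  let: (p, n) := c in
  match (if n == 0%N then d0 else d1) p a with
  | Some (q, e) => if (0 <= n%:Z + e)%R then Some (q, absz (n%:Z + e)%R) else None
  | None => None
  end.

Fixpoint orun (Q Sigma : Type) (d0 d1 : Q -> Sigma -> option (Q * int))
  (c : Q * nat) (w : seq Sigma) : option (Q * nat) :=
  match w with
  | [::] => Some c
  | a :: w' => match ostep d0 d1 c a with
               | Some c' => orun d0 d1 c' w'
               | None => None
               end
  end.

Definition oaccepts (Q : finType) (Sigma : Type)
  (d0 d1 : Q -> Sigma -> option (Q * int)) (q0 : Q) (F : {set Q})
  (w : seq Sigma) : bool :=
  if orun d0 d1 (q0, 0%N) w is Some (q, _) then q \in F else false.

From HB Require Import structures.
From mathcomp Require Import all_boot all_order all_algebra zify.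
Import GRing.Theory Num.Theory.

Set Implicit Arguments.
Unset Strict Implicit.
Unset Printing Implicit Defensive.

(* Every transition of the DFA is read along a prefix of a positive enriched
   sample. An [sigma^c]-transition from q therefore lies on [Enc(x sigma)] with
   [c = sgn(ce x)] and [x sigma] a sample prefix; as [Enc x . Act x] is
   positive, q also has an [Act x]-transition, and [Act x|_sigma] is defined.
   Any other action [op] with [op.1 = c] enabled at q must agree with [Act x]
   wherever both are defined: otherwise [Enc x . op] is a negative sample that
   the DFA accepts, since the target of an action transition is accepting.
   Hence the counter update chosen by the DROCA on [sigma] at the state
   reached by [Enc x] is [ce(x sigma) - ce x], and by induction the DROCA
   simulates the DFA on [Enc w] while its counter tracks [ce w]. *)

Lemma prefix_rcons_inv (T : eqType) (s t : seq T) x :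
  prefix s (rcons t x) -> prefix s t \/ s = rcons t x.
Proof.
rewrite prefixE => /eqP <-; case: (leqP (size s) (size t)) => hst.
  by left; rewrite -cats1 takel_cat // prefix_take.
by right; rewrite take_oversize // size_rcons.
Qed.

Lemma drun_rcons (Q X : Type) (d : Q -> X -> option Q) q u x :
  drun d q (rcons u x) = if drun d q u is Some q' then d q' x else None.
Proof. by elim: u q => [|y u IHu] q /=; case: (d q _). Qed.

Lemma orun_rcons (Q Sigma : Type) (d0 d1 : Q -> Sigma -> option (Q * int)) c w a :
  orun d0 d1 c (rcons w a) =
  if orun d0 d1 c w is Some c' then ostep d0 d1 c' a else None.
Proof. by elim: w c => [|y w IHw] c /=; case: ostep. Qed.

Section Encoding.
Variables (Sigma : finType) (ce : seq Sigma -> nat).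

Lemma size_enc_aux p w : size (enc_aux ce p w) = size w.
Proof. by elim: w p => [|b w IHw] p //=; rewrite IHw. Qed.

Lemma take_enc_aux n p w : take n (enc_aux ce p w) = enc_aux ce p (take n w).
Proof. by elim: w n p => [|b w IHw] [|n] p //=; rewrite IHw. Qed.

Lemma enc_aux_rcons p w a :
  enc_aux ce p (rcons w a) =
  rcons (enc_aux ce p w)
        (inl (a, if p ++ w is [::] then false else sgnb (ce (p ++ w)))).
Proof. by elim: w p => [|b w IHw] p /=; rewrite ?cats0 ?IHw ?cat_rcons. Qed.

Hypothesis ce0 : ce [::] = 0%N.

Lemma Enc_rcons w a : Enc ce (rcons w a) = rcons (Enc ce w) (inl (a, sgnb (ce w))).
Proof. by rewrite /Enc enc_aux_rcons; case: w => //=; rewrite ce0. Qed.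

Lemma prefix_Enc_inl u a c w :
  prefix (rcons u (inl (a, c))) (Enc ce w) ->
  exists x, [/\ u = Enc ce x, c = sgnb (ce x) & prefix (rcons x a) w].
Proof.
rewrite prefixE /Enc take_enc_aux => /eqP.
have := prefix_take w (size (rcons u (inl (a, c)))).
set t := take _ w => t_pre Et.
have : size t = size (rcons u (inl (a, c))) by rewrite -Et size_enc_aux.
case/lastP: t t_pre Et => [|x b]; first by rewrite size_rcons.
by rewrite -/(Enc ce _) Enc_rcons => x_pre /rcons_inj[<- <- <-]; exists x.
Qed.

Lemma prefix_Enc_inr u z w : ~ prefix (rcons u (inr z)) (Enc ce w).
Proof.
have all_inl p v : all (fun y : hatT Sigma => if y is inl _ then true else false)
                       (enc_aux ce p v) by elim: v p => [|b v IHv] p //=.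
by case/prefixP => s Ew; have := all_inl [::] w; rewrite -/(Enc ce w) Ew all_cat all_rcons.
Qed.

End Encoding.

Section Sample.
Variables (Sigma : finType) (Sp Sm : seq (seq Sigma)) (ce : seq Sigma -> nat).

Local Notation inpref := (inpref Sp Sm).
Local Notation Act := (Act Sp Sm ce).

Lemma inpref_prefix x w : prefix x w -> inpref w -> inpref x.
Proof. by move=> xw /hasP[v Sv wv]; apply/hasP; exists v; last exact: prefix_trans wv. Qed.

Lemma inpref_rcons w a : inpref (rcons w a) -> inpref w.
Proof. exact/inpref_prefix/prefix_rcons. Qed.

Lemma inpref_Sp w : w \in Sp -> inpref w.
Proof. by move=> Sw; apply/hasP; exists w; rewrite ?mem_cat ?Sw ?prefix_refl. Qed.

Lemma inpref_Sm w : w \in Sm -> inpref w.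
Proof. by move=> Sw; apply/hasP; exists w; rewrite ?mem_cat ?Sw ?orbT ?prefix_refl. Qed.

Lemma Act_defined w a : ((Act w).2 a != None) = inpref (rcons w a).
Proof. by rewrite ffunE; case: inpref. Qed.

Lemma Act_update w a :
  inpref (rcons w a) -> (Act w).2 a = Some ((ce (rcons w a))%:Z - (ce w)%:Z)%R.
Proof. by rewrite ffunE => ->. Qed.

Section Dfa.
Variables (Q : finType) (q0 : Q) (d : Q -> hatT Sigma -> option Q) (F : {set Q}).
Hypothesis ce0 : ce [::] = 0%N.
Hypothesis d_pos : forall u, Shat_pos Sp Sm ce u -> daccepts d q0 F u.
Hypothesis d_neg : forall u, Shat_neg Sp Sm ce u -> ~~ daccepts d q0 F u.
Hypothesis d_trans_origin : forall q x q', d q x = Some q' ->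
  exists u, (exists2 v, Shat_pos Sp Sm ce v & prefix (rcons u x) v)
            /\ drun d q0 u = Some q.

Lemma accepts_Enc_Act w :
  inpref w -> daccepts d q0 F (rcons (Enc ce w) (inr (Act w))).
Proof. by move=> w_pref; apply: d_pos; right; exists w. Qed.

Lemma drun_Enc_Act w : inpref w ->
  exists2 q, drun d q0 (Enc ce w) = Some q & d q (inr (Act w)) <> None.
Proof.
move/accepts_Enc_Act; rewrite /daccepts drun_rcons.
by case: drun => // q; case Eq: (d q _) => // _; exists q; rewrite ?Eq.
Qed.

Lemma act_trans_origin q op q' : d q (inr op) = Some q' ->
  exists w, [/\ inpref w, op = Act w, drun d q0 (Enc ce w) = Some q & q' \in F].
Proof.
move=> dq; have [u [[v [[w _ ->]|[w w_pref ->]] uv] du]] := d_trans_origin dq.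
  by case: (prefix_Enc_inr uv).
case: (prefix_rcons_inv uv) => [/prefix_Enc_inr[] // | /rcons_inj[Eu [Eop]]].
subst u op; exists w; split=> //.
by have := accepts_Enc_Act w_pref; rewrite /daccepts drun_rcons du dq.
Qed.

Lemma letter_trans_origin q a c q' : d q (inl (a, c)) = Some q' ->
  exists x, [/\ inpref (rcons x a), drun d q0 (Enc ce x) = Some q & c = sgnb (ce x)].
Proof.
move=> dq; have [u [[v Sv uv] du]] := d_trans_origin dq.
have [w [w_pref Ev]] : exists w, inpref w /\ prefix (rcons u (inl (a, c))) (Enc ce w).
  case: Sv uv => [[w Sw ->]|[w w_pref ->]] uv; first by exists w; rewrite inpref_Sp.
  by case: (prefix_rcons_inv uv) => [|/rcons_inj[]] //; exists w.
have [x [Eu Ec xw]] := prefix_Enc_inl ce0 Ev.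
by exists x; split; rewrite -?Eu //; apply: inpref_prefix w_pref.
Qed.

Lemma enabled_act_agrees w q op q' a :
  inpref w -> drun d q0 (Enc ce w) = Some q -> d q (inr op) = Some q' ->
  op.1 = (Act w).1 -> op.2 a <> None -> (Act w).2 a <> None ->
  op.2 a = (Act w).2 a.
Proof.
move=> w_pref dw dq E1 op_a Act_a; apply/eqP/negPn/negP => ne_a.
have [w' [w'_pref Eop _ q'F]] := act_trans_origin dq.
have : Shat_neg Sp Sm ce (rcons (Enc ce w) (inr op)).
  right; exists w, op; split=> //; first by exists w'.
  by case=> [|/(_ a) [|[|/eqP]]] //; apply/negP.
by move/d_neg; rewrite /daccepts drun_rcons dw dq q'F.
Qed.

Lemma letter_act_exists q a c q' : d q (inl (a, c)) = Some q' ->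
  exists act : actT Sigma,
    [/\ inSigmaAct Sp Sm ce act, act.1 = c, d q (inr act) <> None & act.2 a <> None].
Proof.
case/letter_trans_origin=> x [xa_pref dx ->]; have x_pref := inpref_rcons xa_pref.
exists (Act x); split=> //; first by exists x.
  by have [q2] := drun_Enc_Act x_pref; rewrite dx => -[<-].
by apply/eqP; rewrite Act_defined.
Qed.

Lemma letter_act_unique q a c q' (act act' : actT Sigma) :
  d q (inl (a, c)) = Some q' ->
  act.1 = c -> d q (inr act) <> None -> act.2 a <> None ->
  act'.1 = c -> d q (inr act') <> None -> act'.2 a <> None ->
  act.2 a = act'.2 a.
Proof.
case/letter_trans_origin=> x [xa_pref dx ->]; have x_pref := inpref_rcons xa_pref.
have Act_a : (Act x).2 a <> None by apply/eqP; rewrite Act_defined.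
move=> E1 + act_a E1' + act'_a.
case da: (d q (inr act)) => [q2|] // _; case da': (d q (inr act')) => [q3|] // _.
rewrite (enabled_act_agrees x_pref dx da E1 act_a Act_a).
by rewrite (enabled_act_agrees x_pref dx da' E1' act'_a Act_a).
Qed.

Section Droca.
Variables d0 d1 : Q -> Sigma -> option (Q * int).
Hypothesis d01_def : forall q a (c : bool),
  (forall q', d q (inl (a, c)) = Some q' ->
     exists (act : actT Sigma) (e : int),
       [/\ inSigmaAct Sp Sm ce act, act.1 = c, d q (inr act) <> None,
           act.2 a = Some e & (if c then d1 else d0) q a = Some (q', e)]) /\
  (d q (inl (a, c)) = None -> (if c then d1 else d0) q a = None).

Lemma droca_update_origin q a (c : bool) q' e :
  (if c then d1 else d0) q a = Some (q', e) ->
  exists w, [/\ inpref (rcons w a), sgnb (ce w) = c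
              & e = ((ce (rcons w a))%:Z - (ce w)%:Z)%R].
Proof.
move=> dc; case dq: (d q (inl (a, c))) => [q2|]; last first.
  by rewrite ((d01_def q a c).2 dq) in dc.
have [_ [e' [[w _ ->] E1 _ + dc']]] := (d01_def q a c).1 _ dq.
rewrite dc' in dc; case: dc => _ <- Act_a.
have wa_pref : inpref (rcons w a) by rewrite -Act_defined Act_a.
by exists w; split=> //; move: Act_a; rewrite Act_update // => -[].
Qed.

Lemma orun_Enc w : inpref w -> exists q,
  drun d q0 (Enc ce w) = Some q /\ orun d0 d1 (q0, 0%N) w = Some (q, ce w).
Proof.
elim/last_ind: w => [|w a IHw] wa_pref; first by exists q0; rewrite ce0.
have w_pref := inpref_rcons wa_pref.
have [q [dw ow]] := IHw w_pref.
have [q2 + _] := drun_Enc_Act wa_pref.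
rewrite Enc_rcons // drun_rcons dw => dq.
have [act [e [_ E1 + act_a dc]]] := (d01_def q a (sgnb (ce w))).1 _ dq.
case da: (d q (inr act)) => [q3|] // _.
have Act_a : (Act w).2 a <> None by apply/eqP; rewrite Act_defined.
have [Ee] : Some e = Some ((ce (rcons w a))%:Z - (ce w)%:Z)%R.
  by rewrite -act_a -Act_update // (enabled_act_agrees w_pref dw da E1) // act_a.
exists q2; split=> //; rewrite orun_rcons ow /=.
have ce_wa : ((ce w)%:Z + e = (ce (rcons w a))%:Z)%R by rewrite Ee addrC subrK.
by move: dc; rewrite /sgnb; case: (ce w == 0%N) => /= ->; rewrite ce_wa le0z_nat.
Qed.

End Droca.
End Dfa.
End Sample.

Theorem lemma3 (Sigma : finType) (Sp Sm : seq (seq Sigma))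
  (ce : seq Sigma -> nat)
  (Q : finType) (q0 : Q) (d : Q -> hatT Sigma -> option Q) (F : {set Q}) :
  (* sample set and counter-effect function *)
  (forall w, w \in Sp -> w \notin Sm) ->
  ce [::] = 0%N ->
  (forall (w : seq Sigma) (a : Sigma), inpref Sp Sm (rcons w a) ->
     ((ce (rcons w a))%:Z - (ce w)%:Z)%R \in [:: (-1)%R; 0%R; 1%R]) ->
  (* (i) consistency of the DFA with the enriched sample *)
  (forall u, Shat_pos Sp Sm ce u -> daccepts d q0 F u) ->
  (forall u, Shat_neg Sp Sm ce u -> ~~ daccepts d q0 F u) ->
  (* (ii) every transition comes from a prefix of a positive sample *)
  (forall q x q', d q x = Some q' ->
     exists u, (exists2 v, Shat_pos Sp Sm ce v & prefix (rcons u x) v)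
               /\ drun d q0 u = Some q) ->
  [/\
   (* such an act always exists *)
   (forall q a (c : bool) q', d q (inl (a, c)) = Some q' ->
      exists act : actT Sigma,
        [/\ inSigmaAct Sp Sm ce act, act.1 = c, d q (inr act) <> None
          & act.2 a <> None]),
   (* act|_sigma does not depend on the choice of act *)
   (forall q a (c : bool) q' (act act' : actT Sigma),
      d q (inl (a, c)) = Some q' ->
      inSigmaAct Sp Sm ce act -> act.1 = c -> d q (inr act) <> None ->
      act.2 a <> None ->
      inSigmaAct Sp Sm ce act' -> act'.1 = c -> d q (inr act') <> None ->
      act'.2 a <> None ->
      act.2 a = act'.2 a) &
   (* any d0, d1 built as described form a DROCA consistent with the sample *)
   (forall d0 d1 : Q -> Sigma -> option (Q * int),
      (forall q a (c : bool),
         (forall q', d q (inl (a, c)) = Some q' ->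
            exists (act : actT Sigma) (e : int),
              [/\ inSigmaAct Sp Sm ce act, act.1 = c, d q (inr act) <> None,
                  act.2 a = Some e
                & (if c then d1 else d0) q a = Some (q', e)]) /\
         (d q (inl (a, c)) = None -> (if c then d1 else d0) q a = None)) ->
      [/\ (forall q a q' e, d0 q a = Some (q', e) -> e \in [:: 0%R; 1%R]),
          (forall q a q' e, d1 q a = Some (q', e) -> e \in [:: 0%R; 1%R; (-1)%R]),
          (forall w, inpref Sp Sm w ->
             exists q, orun d0 d1 (q0, 0%N) w = Some (q, ce w)),
          (forall w, w \in Sp -> oaccepts d0 d1 q0 F w)
        & (forall w, w \in Sm -> ~~ oaccepts d0 d1 q0 F w)])].
Proof.
move=> _ ce0 ce_step d_pos d_neg d_origin.
split=> [q a c q' | q a c q' act act' dq _ E1 da act_a _ |d0 d1 d01_def].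
- exact: (letter_act_exists ce0 d_pos d_origin).
- exact: (letter_act_unique ce0 d_pos d_neg d_origin dq E1 da act_a).
have run := orun_Enc ce0 d_pos d_neg d_origin d01_def.
have update := droca_update_origin d01_def.
split=> [q a q' e /(update _ _ false)|q a q' e /(update _ _ true)|w|w Sw|w Sw].
- case=> w [wa_pref /negbFE/eqP ce_w ->]; move: (ce_step _ _ wa_pref).
  by rewrite ce_w !inE => /or3P[] /eqP E; lia.
- by case=> w [wa_pref _ ->]; move: (ce_step _ _ wa_pref); rewrite !inE; case/or3P=> ->; rewrite ?orbT.
- by case/run=> q [_ ow]; exists q.
- have [q [dw ow]] := run w (inpref_Sp Sm Sw).
  have := d_pos _ (or_introl (ex_intro2 _ _ w Sw erefl)).
  by rewrite /oaccepts /daccepts ow dw.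
- have [q [dw ow]] := run w (inpref_Sm Sp Sw).
  have := d_neg _ (or_introl (ex_intro2 _ _ w Sw erefl)).
  by rewrite /oaccepts /daccepts ow dw.
Qed.
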